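(* Let $\mathcal H=\{H_1,\dots,H_n\}$ be oriented affine hyperplanes in $\mathbb R^d$ such that $(\mathcal H,\mathbb R^d)$ has generic intersections, i.e. for every $\sigma\subseteq[n]$ with $\bigcap_{i\in\sigma}H_i\neq\emptyset$ one has $\dim\bigcap_{i\in\sigma}H_i=d-|\sigma|$. Then $\Gamma(\mathrm{code}(\mathcal H,\mathbb R^d))$ is shellable.
   Context: $H_i=\{x:w_i\cdot x-h_i=0\}$ with $w_i\ne0$ and $H_i^+=\{w_i\cdot x-h_i>0\}$. $\mathrm{code}(\mathcal H,\mathbb R^d)$ is the set of $\sigma\subseteq[n]$ such that $\bigl(\bigcap_{i\in\sigma}H_i^+\bigr)\setminus\bigcup_{j\notin\sigma}H_j^+\neq\emptyset$ (the empty intersection being $\mathbb R^d$). The polar complex $\Gamma(\mathcal C)$ is the simplicial complex on $[n]\sqcup\{\bar1,\dots,\bar n\}$ consisting of all subsets of the sets $\sigma\sqcup\{\bar i:i\in[n]\setminus\sigma\}$, $\sigma\in\mathcal C$; it is pure of dimension $n-1$. A pure $k$-dimensional complex is shellable if its facets admit an ordering $F_1,\dots,F_t$ such that for each $i>1$, the complex of all subsets of $F_i$ intersected with the complex of all subsets of $F_1,\dots,F_{i-1}$ is pure of dimension $k-1$. *)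

From mathcomp Require Import all_boot all_order all_algebra.
From mathcomp Require Import boolp reals.
Set Implicit Arguments. Unset Strict Implicit. Unset Printing Implicit Defensive.
Import Order.TTheory GRing.Theory Num.Theory.
Local Open Scope ring_scope.

Section Defs.
Variable R : realType.
Variable d : nat.

Definition dotp (u v : 'rV[R]_d) : R := \sum_(j < d) u 0 j * v 0 j.

Definition diff_of (S : 'rV[R]_d -> Prop) (v : 'rV[R]_d) : Prop :=
  exists x y, S x /\ S y /\ v = x - y.

(* The (affine) dimension of S is k: the direction space
   span{x - y : x, y in S} has dimension k, i.e. k is the maximal size of a
   linearly independent family of differences of points of S. *)
Definition aff_dim_is (S : 'rV[R]_d -> Prop) (k : nat) : Prop :=
  (exists s : seq 'rV[R]_d, size s = k /\ free s /\ forall v, v \in s -> diff_of S v)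
  /\ (forall s : seq 'rV[R]_d, free s -> (forall v, v \in s -> diff_of S v) ->
        (size s <= k)%N).

Variable n : nat.
Variables (w : 'I_n -> 'rV[R]_d) (h : 'I_n -> R).

Definition hyp_cap (sigma : {set 'I_n}) (x : 'rV[R]_d) : Prop :=
  forall i, i \in sigma -> dotp (w i) x = h i.

Definition generic_intersections : Prop :=
  forall sigma : {set 'I_n}, (exists x, hyp_cap sigma x) ->
    (#|sigma| <= d)%N /\ aff_dim_is (hyp_cap sigma) (d - #|sigma|).

Definition in_code (sigma : {set 'I_n}) : Prop :=
  exists x : 'rV[R]_d, forall i, (i \in sigma) <-> (0 < dotp (w i) x - h i).

Definition code : {set {set 'I_n}} := [set sigma | `[< in_code sigma >]].

End Defs.

(* Polar complex: vertex set [n] + {1bar..nbar} is 'I_n + 'I_n,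
   inl i = i, inr i = ibar. *)
Definition polar_facet (n : nat) (sigma : {set 'I_n}) : {set 'I_n + 'I_n} :=
  [set inl i | i in sigma] :|: [set inr i | i in ~: sigma].

Definition polar_complex (n : nat) (C : {set {set 'I_n}}) : {set {set 'I_n + 'I_n}} :=
  [set G : {set 'I_n + 'I_n} | [exists sigma in C, G \subset polar_facet sigma]].

Section Complexes.
Variable V : finType.

Definition facets (K : {set {set V}}) : {set {set V}} :=
  [set F in K | [forall G in K, (F \subset G) ==> (G == F)]].

(* K is pure, all facets having cardinality c (i.e. pure of dimension c-1):
   every face lies in a face of cardinality c, and no face is larger. *)
Definition pure_card (K : {set {set V}}) (c : nat) : Prop :=
  forall G, G \in K -> (#|G| <= c)%N /\ exists2 F, F \in K & (G \subset F) && (#|F| == c).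

(* the complex of all subsets of F_i that are subsets of some F_j, j < i
   (here indices start at 0) *)
Definition shell_int (s : seq {set V}) (i : nat) : {set {set V}} :=
  [set G : {set V} | (G \subset nth set0 s i) && has (fun F : {set V} => G \subset F) (take i s)].

Definition shellable (K : {set {set V}}) : Prop :=
  exists c : nat, pure_card K c /\
    exists s : seq {set V},
      [/\ uniq s, (forall F, (F \in s) = (F \in facets K)) &
          forall i, (0 < i < size s)%N -> pure_card (shell_int s i) c.-1].

End Complexes.

(* For a codeword sigma let P_sigma be the closed cell of the points lying
   weakly on the sigma-side of every hyperplane; order the codewords by the
   squared distance from the origin to P_sigma, then by cardinality.  Let x be
   the point of P_sigma nearest to the origin.  Genericity makes the normals of
   the hyperplanes through x linearly independent, so flipping sigma at any of
   them gives again a codeword whose closed cell contains x.  If tau comes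
   before sigma, either the direction from x towards the nearest point of
   P_tau is a descent direction, and the independence lets it be realised by
   crossing a single hyperplane through x, one that separates sigma from tau;
   or both cells share x, and removing from sigma an element not in tau keeps
   the distance and lowers the cardinality.  Flipping sigma at g removes
   exactly the vertex g or gbar from its facet of the polar complex, which is
   the shelling condition. *)

From HB Require Import structures.
From mathcomp Require Import all_boot all_order all_algebra.
From mathcomp Require Import boolp reals topology normedtype.
From mathcomp Require classical_sets.
From mathcomp Require Import matrix_normedtype derive.
From mathcomp Require Import ring lra zify.
Set Implicit Arguments. Unset Strict Implicit. Unset Printing Implicit Defensive.
Import Order.TTheory GRing.Theory Num.Theory.
Import numFieldTopology.Exports numFieldNormedType.Exports.
Local Open Scope ring_scope.

Section Flip.
Variable T : finType.
Implicit Types (sigma : {set T}) (g : T).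

Definition flip sigma g : {set T} := [set i | (i \in sigma) (+) (i == g)].

Lemma in_flip sigma g i : (i \in flip sigma g) = (i \in sigma) (+) (i == g).
Proof. by rewrite inE. Qed.

Lemma flipD1 sigma g : g \in sigma -> flip sigma g = sigma :\ g.
Proof.
move=> gs; apply/setP => i; rewrite in_flip !inE.
by case: eqVneq => [->|]; rewrite ?gs ?addbT ?addbF.
Qed.

End Flip.

Section PolarComplex.
Variable n : nat.
Implicit Types (sigma tau : {set 'I_n}) (C : {set {set 'I_n}}).

Lemma polar_facet_inl sigma i : (inl i \in polar_facet sigma) = (i \in sigma).
Proof.
rewrite !inE (mem_imset _ _ (@inl_inj _ _)).
by case: (i \in sigma) => //=; apply/imsetP => -[].
Qed.

Lemma polar_facet_inr sigma i : (inr i \in polar_facet sigma) = (i \notin sigma).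
Proof.
rewrite !inE (mem_imset _ _ (@inr_inj _ _)) inE orbC.
by case: (i \in sigma) => //=; apply/imsetP => -[].
Qed.

Lemma card_polar_facet sigma : #|polar_facet sigma| = n.
Proof.
rewrite cardsU !card_imset; try by move=> ? ? [].
suff -> : [set inl i | i in sigma] :&: [set inr i | i in ~: sigma] = set0.
  by rewrite cards0 subn0 cardsC card_ord.
by apply/setP => v; rewrite !inE; apply/andP => -[/imsetP[x _ ->] /imsetP[y _]].
Qed.

Lemma polar_facet_inj : injective (@polar_facet n).
Proof. by move=> sigma tau eq_st; apply/setP => i; rewrite -!polar_facet_inl eq_st. Qed.

Lemma polar_facet_subset sigma tau :
  polar_facet sigma \subset polar_facet tau -> sigma = tau.
Proof.
by move=> sub; apply: polar_facet_inj; apply/eqP; rewrite eqEcard sub !card_polar_facet leqnn.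
Qed.

Definition polar_vertex sigma g : 'I_n + 'I_n := if g \in sigma then inl g else inr g.

Lemma polar_vertex_in sigma tau g :
  (polar_vertex sigma g \in polar_facet tau) = ((g \in sigma) == (g \in tau)).
Proof.
rewrite /polar_vertex.
by case: (g \in sigma); rewrite ?polar_facet_inl ?polar_facet_inr; case: (g \in tau).
Qed.

Lemma polar_facetD1_flip sigma g :
  polar_facet sigma :\ polar_vertex sigma g \subset polar_facet (flip sigma g).
Proof.
apply/subsetP => v; rewrite in_setD1 /polar_vertex.
by case: v => i; rewrite ?polar_facet_inl ?polar_facet_inr in_flip;
  case: (eqVneq i g) => [->|_]; case: (g \in sigma); rewrite /= ?eqxx ?addbF // => /andP[].
Qed.

Lemma mem_polar_complex C G :
  (G \in polar_complex C) = [exists sigma in C, G \subset polar_facet sigma].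
Proof. by rewrite inE. Qed.

Lemma polar_facet_in_complex C sigma : sigma \in C -> polar_facet sigma \in polar_complex C.
Proof. by move=> sC; rewrite mem_polar_complex; apply/exists_inP; exists sigma. Qed.

Lemma pure_polar_complex C : pure_card (polar_complex C) n.
Proof.
move=> G; rewrite mem_polar_complex => /exists_inP[sigma sC sub]; split.
  by rewrite -[X in (_ <= X)%N](card_polar_facet sigma) subset_leq_card.
exists (polar_facet sigma); first exact: polar_facet_in_complex.
by rewrite sub card_polar_facet /=.
Qed.

Lemma facets_polar_complex C F :
  (F \in facets (polar_complex C)) = (F \in @polar_facet n @: C).
Proof.
rewrite inE; apply/andP/imsetP => [[] | [sigma sC ->]].
  rewrite mem_polar_complex => /exists_inP[sigma sC sub] /forall_inP max.
  exists sigma => //; apply/esym/eqP.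
  by move: (max _ (polar_facet_in_complex sC)); rewrite sub.
split; first exact: polar_facet_in_complex.
apply/forall_inP => G; rewrite mem_polar_complex => /exists_inP[tau _ subG].
apply/implyP => sub; rewrite eqEsubset sub andbT.
by rewrite (polar_facet_subset (subset_trans sub subG)).
Qed.

Lemma card_polar_facetD1 sigma g : #|polar_facet sigma :\ polar_vertex sigma g| = n.-1.
Proof.
have := cardsD1 (polar_vertex sigma g) (polar_facet sigma).
by rewrite polar_vertex_in eqxx card_polar_facet add1n => /(congr1 predn) ->.
Qed.

Lemma pure_polar_shell_int s i : (i < size s)%N ->
  (forall tau, tau \in take i s ->
     exists2 g, (g \in nth set0 s i) != (g \in tau) & flip (nth set0 s i) g \in take i s) ->
  pure_card (shell_int (map (@polar_facet n) s) i) n.-1.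
Proof.
move=> lt_i_s flip_earlier G; set sigma := nth set0 s i in flip_earlier *.
rewrite inE (nth_map set0) // -map_take => /andP[subG /hasP[_ /mapP[tau tau_s ->] subGt]].
have [g neq_g flip_s] := flip_earlier tau tau_s.
set ridge := polar_facet sigma :\ polar_vertex sigma g.
have subGr : G \subset ridge.
  apply/subsetP => v vG; rewrite in_setD1 (subsetP subG) // andbT.
  apply: contraTneq (subsetP subGt v vG) => ->.
  by rewrite polar_vertex_in (negbTE neq_g).
split; first by rewrite -(card_polar_facetD1 sigma g) subset_leq_card.
exists ridge; last by rewrite subGr card_polar_facetD1 /=.
rewrite inE (nth_map set0) // subD1set -map_take /=.
by apply/hasP; exists (polar_facet (flip sigma g)); [apply: map_f | apply: polar_facetD1_flip].
Qed.

Lemma shellable_polar_complex C s : uniq s -> s =i C ->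
  (forall i, (i < size s)%N -> forall tau, tau \in take i s ->
     exists2 g, (g \in nth set0 s i) != (g \in tau) & flip (nth set0 s i) g \in take i s) ->
  shellable (polar_complex C).
Proof.
move=> uniq_s s_C flip_earlier; exists n; split; first exact: pure_polar_complex.
exists (map (@polar_facet n) s); split.
- by rewrite map_inj_uniq //; apply: polar_facet_inj.
- move=> F; rewrite facets_polar_complex; apply/mapP/imsetP => -[sigma].
    by rewrite s_C; exists sigma.
  by rewrite -s_C; exists sigma.
- move=> i /andP[_]; rewrite size_map => lt_i_s.
  exact: pure_polar_shell_int (flip_earlier i lt_i_s).
Qed.

End PolarComplex.

Section SortedTake.
Variables (T : eqType) (leT : rel T) (x0 : T).
Hypotheses (leT_tr : transitive leT) (leT_refl : reflexive leT).

Lemma sorted_take_le s i y : sorted leT s -> (i < size s)%N -> y \in take i s ->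
  leT y (nth x0 s i).
Proof.
move=> sorted_s lt_i_s y_take; have y_s := mem_take y_take.
rewrite -(nth_index x0 y_s); apply: sorted_leq_nth; rewrite ?inE ?index_mem //.
exact/ltnW/index_ltn.
Qed.

Lemma sorted_mem_take s i x : sorted leT s -> x \in s -> ~~ leT (nth x0 s i) x ->
  x \in take i s.
Proof.
move=> sorted_s x_s; apply: contraR; rewrite in_take // -leqNgt => le_i_x.
have lt_x_s : (index x s < size s)%N by rewrite index_mem.
rewrite -[x in leT _ x](nth_index x0 x_s); apply: sorted_leq_nth; rewrite ?inE //.
exact: leq_ltn_trans lt_x_s.
Qed.

End SortedTake.

Lemma nth_notin_take (T : eqType) (x0 : T) s i : uniq s -> (i < size s)%N ->
  nth x0 s i \notin take i s.
Proof. by move=> uniq_s lt_i_s; rewrite in_take ?mem_nth // index_uniq // ltnn. Qed.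

Section DotProduct.
Variables (R : realType) (d : nat).
Implicit Types (u v x : 'rV[R]_d).

Lemma dotpC u v : dotp u v = dotp v u.
Proof. by apply: eq_bigr => j _; rewrite mulrC. Qed.

Lemma dotp_is_linear u : scalar (dotp u).
Proof.
move=> a x y; rewrite /dotp mulr_sumr -big_split; apply: eq_bigr => j _ /=.
by rewrite !mxE; ring.
Qed.

HB.instance Definition _ u :=
  GRing.isLinear.Build R 'rV[R]_d R *%R (dotp u) (dotp_is_linear u).

Lemma dotp0r u : dotp u 0 = 0. Proof. exact: linear0. Qed.
Lemma dotpDr u x y : dotp u (x + y) = dotp u x + dotp u y. Proof. exact: linearD. Qed.
Lemma dotpNr u x : dotp u (- x) = - dotp u x. Proof. exact: linearN. Qed.
Lemma dotpBr u x y : dotp u (x - y) = dotp u x - dotp u y. Proof. exact: linearB. Qed.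
Lemma dotpZr u a x : dotp u (a *: x) = a * dotp u x. Proof. exact: linearZ. Qed.
Lemma dotp_sumr u (I : Type) (r : seq I) (P : pred I) (F : I -> 'rV[R]_d) :
  dotp u (\sum_(i <- r | P i) F i) = \sum_(i <- r | P i) dotp u (F i).
Proof. exact: linear_sum. Qed.

Lemma dotp_ge0 u : 0 <= dotp u u.
Proof. by apply: sumr_ge0 => j _; rewrite -expr2 sqr_ge0. Qed.

Lemma dotp_eq0 u : (dotp u u == 0) = (u == 0).
Proof.
apply/idP/eqP => [/eqP|->]; last by rewrite dotp0r.
move=> /psumr_eq0P u0; apply/rowP => j; apply/eqP; rewrite mxE -sqrf_eq0 expr2.
by rewrite u0 // => k _; rewrite -expr2 sqr_ge0.
Qed.

Lemma dotp_line x u t :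
  dotp (x + t *: u) (x + t *: u) = dotp x x + t * (2 * dotp x u + t * dotp u u).
Proof.
by rewrite dotpDr dotpZr !(dotpC (x + _)) !dotpDr !dotpZr (dotpC u x); ring.
Qed.

End DotProduct.

Section MinimumNorm.
Variables (R : realType) (d : nat).
Import classical_sets.
Local Open Scope classical_set_scope.

Lemma continuous_dotp (T : topologicalType) (f g : T -> 'rV[R]_d) :
  continuous f -> continuous g -> continuous (fun z => dotp (f z) (g z)).
Proof.
move=> cf cg; rewrite /dotp; apply: continuous_big => [|j _ z]; first exact: add_continuous.
have coord_comp (F : T -> 'rV[R]_d) : continuous F -> {for z, continuous (fun y => F y 0 j)}.
  move=> cF; apply: (@continuous_comp _ _ _ F (fun M => M 0 j) z (cF z)).
  exact: coord_continuous.
exact: continuousM (coord_comp _ cf) (coord_comp _ cg).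
Qed.

Lemma sqr_coord_le_dotp (z : 'rV[R]_d) j : z 0 j ^+ 2 <= dotp z z.
Proof.
rewrite /dotp (bigD1 j) //= expr2 lerDl.
by apply: sumr_ge0 => i _; rewrite -expr2 sqr_ge0.
Qed.

Lemma bounded_dotp_le (A : set 'rV[R]_d) (c : R) :
  (forall z, A z -> dotp z z <= c) -> bounded_set A.
Proof.
move=> Ac; exists (1 + c); split; first by rewrite num_real.
move=> M ltM z /Ac zc; rewrite /Num.Def.normr /= mx_normrE.
have c_ge0 : 0 <= c := le_trans (dotp_ge0 z) zc.
apply: bigmax_le => [|[i j] _ /=]; first lra.
have := sqr_coord_le_dotp z j; rewrite (ord1 i) -real_normK ?num_real //.
have := normr_ge0 (z 0 j); move: `|z 0 j| => a; nra.
Qed.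

Lemma closed_min_dotp (A : set 'rV[R]_d) z0 : closed A -> A z0 ->
  exists2 x, A x & forall z, A z -> dotp x x <= dotp z z.
Proof.
move=> clA Az0; set B := A `&` [set z | dotp z z <= dotp z0 z0].
have cont_sqr : continuous (fun z : 'rV[R]_d => dotp z z).
  by apply: continuous_dotp => z; apply: cvg_id.
have compactB : compact B.
  apply: bounded_closed_compact; first by apply: (@bounded_dotp_le _ (dotp z0 z0)) => z [].
  by apply: closedI => //; apply: (preimage_closed (fun z _ => cont_sqr z) (@closed_le R _)).
have [x /set_mem[Ax xz0] min_x] := EVT_min_rV (ex_intro _ z0 (conj Az0 (lexx _))) compactB
  (continuous_subspaceT cont_sqr).
exists x => // z Az; have [zz0|z0z] := leP (dotp z z) (dotp z0 z0).
  by apply: min_x; rewrite inE.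
exact: le_trans xz0 (ltW z0z).
Qed.

End MinimumNorm.

Lemma exists_small_step (R : realFieldType) (I : finType) (a b : I -> R) :
  exists2 t, 0 < t & forall i, 0 < a i -> 0 < a i + t * b i.
Proof.
pose c i := if 0 < a i then `|b i| / a i else 0.
have c_ge0 i : 0 <= c i by rewrite /c; case: ifP => // /ltW a_ge0; rewrite divr_ge0.
pose S := \sum_i c i; have S_ge0 : 0 <= S by apply: sumr_ge0.
pose t := (1 + S)^-1.
have t_gt0 : 0 < t by rewrite invr_gt0; lra.
have tS_lt1 : t * S < 1 by rewrite ltr_pdivrMl ?mulr1; lra.
exists t => // i a_gt0.
have tc_le : t * c i <= t * S.
  by apply: ler_wpM2l; [exact: ltW | rewrite /S (bigD1 i) //= lerDl sumr_ge0].
have := lerNnormlW (lexx `|b i|).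
rewrite /c a_gt0 in tc_le *; rewrite -[`|b i|](divfK (lt0r_neq0 a_gt0)).
nra.
Qed.

Section Hyperplanes.
Variables (R : realType) (d n : nat).
Variables (w : 'I_n -> 'rV[R]_d) (h : 'I_n -> R).

Definition side (sigma : {set 'I_n}) i : R := if i \in sigma then 1 else -1.

Definition slack sigma i (z : 'rV[R]_d) : R := side sigma i * (dotp (w i) z - h i).

Definition cell sigma (z : 'rV[R]_d) : Prop := forall i, 0 <= slack sigma i z.

Definition active (x : 'rV[R]_d) : {set 'I_n} := [set i | dotp (w i) x == h i].

Lemma side_sqr sigma i : side sigma i * side sigma i = 1.
Proof. by rewrite /side; case: ifP; rewrite ?mulr1 ?mulrNN ?mulr1. Qed.

Lemma side_flip sigma g i :
  side (flip sigma g) i = if i == g then - side sigma i else side sigma i.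
Proof.
rewrite /side in_flip; case: (eqVneq i g) => [->|_]; last by rewrite addbF.
by case: (g \in sigma); rewrite ?opprK.
Qed.

Lemma slack_line sigma i x t u :
  slack sigma i (x + t *: u) = slack sigma i x + t * (side sigma i * dotp (w i) u).
Proof. by rewrite /slack dotpDr dotpZr; ring. Qed.

Lemma slack_eq0 sigma i x : (slack sigma i x == 0) = (i \in active x).
Proof.
by rewrite inE /slack mulf_eq0 subr_eq0 /side; case: ifP; rewrite ?oppr_eq0 oner_eq0.
Qed.

Lemma active_slack sigma x i : i \in active x -> slack sigma i x = 0.
Proof. by rewrite -(slack_eq0 sigma) => /eqP. Qed.

Lemma cell_flip sigma g x : cell sigma x -> g \in active x -> cell (flip sigma g) x.
Proof.
move=> cell_x g_act i; rewrite /slack side_flip; case: eqVneq => [->|_]; last exact: cell_x.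
by rewrite mulNr -/(slack sigma g x) active_slack // oppr0.
Qed.

Lemma cell_of_code sigma : sigma \in code w h -> exists z, cell sigma z.
Proof.
rewrite inE => /asboolP[z code_z]; exists z => i; have := code_z i.
rewrite /slack /side; case: (i \in sigma) => -[+ code_zi].
  by rewrite mul1r => /(_ isT) /ltW.
by rewrite mulN1r oppr_ge0 leNgt => _; apply/negP => /code_zi.
Qed.

Lemma code_of_slack_gt0 sigma z : (forall i, 0 < slack sigma i z) -> sigma \in code w h.
Proof.
move=> slack_gt0; rewrite inE; apply/asboolP; exists z => i; have := slack_gt0 i.
rewrite /slack /side; case: (i \in sigma); rewrite ?mul1r //.
by rewrite mulN1r oppr_gt0 => /lt_gtF ->.
Qed.

Definition min_point sigma x := cell sigma x /\ forall z, cell sigma z -> dotp x x <= dotp z z.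

Section CellNorm.
Import classical_sets.
Local Open Scope classical_set_scope.

Lemma closed_cell sigma : closed (cell sigma).
Proof.
have -> : cell sigma = \bigcap_i [set z | 0 <= slack sigma i z].
  by rewrite predeqE => z; split=> [cz i _ | cz i]; [exact: cz | exact: cz].
apply: closed_bigI => i _; apply: (preimage_closed _ (@closed_ge R 0)) => z _.
apply: (@continuousM _ _ (fun=> side sigma i) (fun z => dotp (w i) z - h i)).
  exact: cst_continuous.
apply: (@continuousB _ _ _ (dotp (w i)) (fun=> h i)); last exact: cst_continuous.
by apply: continuous_dotp => // y; [apply: cst_continuous | apply: cvg_id].
Qed.

Lemma exists_min_point sigma : sigma \in code w h -> exists x, min_point sigma x.
Proof.
case/cell_of_code => z0 /(closed_min_dotp (@closed_cell sigma)) [x cell_x min_x].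
by exists x.
Qed.

Definition cell_sqnorm sigma : R := inf [set dotp z z | z in cell sigma].

Lemma cell_sqnorm_le sigma z : cell sigma z -> cell_sqnorm sigma <= dotp z z.
Proof.
move=> cell_z; apply: ge_inf; last by exists z.
by exists 0 => _ [y _ <-]; apply: dotp_ge0.
Qed.

Lemma cell_sqnorm_min sigma x : min_point sigma x -> cell_sqnorm sigma = dotp x x.
Proof.
move=> [cell_x min_x]; apply/le_anti; rewrite cell_sqnorm_le //=.
by apply: lb_le_inf; [exists (dotp x x), x | move=> _ [z cell_z <-]; apply: min_x].
Qed.

End CellNorm.

Lemma cell_slack_gt0 sigma x i : cell sigma x -> i \notin active x -> 0 < slack sigma i x.
Proof. by move=> cell_x; rewrite -(slack_eq0 sigma) lt_def => ->; apply: cell_x. Qed.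

Lemma cell_descent sigma x u : cell sigma x ->
  (forall i, i \in active x -> 0 <= side sigma i * dotp (w i) u) -> dotp x u < 0 ->
  cell_sqnorm sigma < dotp x x.
Proof.
move=> cell_x u_in x_u.
pose a o := if o is Some i then slack sigma i x else - (2 * dotp x u).
pose b o := if o is Some i then side sigma i * dotp (w i) u else - dotp u u.
have [t t_gt0 step] := exists_small_step a b.
have cell_z : cell sigma (x + t *: u).
  move=> i; rewrite slack_line; have [i_act | i_pas] := boolP (i \in active x).
    by rewrite active_slack // add0r mulr_ge0 ?u_in ?ltW.
  exact/ltW/(step (Some i))/cell_slack_gt0.
apply: le_lt_trans (cell_sqnorm_le cell_z) _; rewrite dotp_line.
have := step None; rewrite /a /b; nra.
Qed.

Lemma code_of_cell sigma x u : cell sigma x ->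
  (forall i, i \in active x -> 0 < side sigma i * dotp (w i) u) -> sigma \in code w h.
Proof.
move=> cell_x u_in.
have [t t_gt0 step] := exists_small_step (fun i => slack sigma i x)
  (fun i => side sigma i * dotp (w i) u).
apply: (@code_of_slack_gt0 _ (x + t *: u)) => i; rewrite slack_line.
have [i_act | i_pas] := boolP (i \in active x); last exact/step/cell_slack_gt0.
by rewrite active_slack // add0r mulr_gt0 ?u_in.
Qed.

Lemma flip_descent sigma x g e : cell sigma x -> g \in active x ->
  (forall i, i \in active x -> dotp (w i) e = (i == g)%:R) -> 0 < side sigma g * dotp x e ->
  cell_sqnorm (flip sigma g) < dotp x x.
Proof.
move=> cell_x g_act e_dual x_e.
apply: (cell_descent (u := - side sigma g *: e)) (cell_flip cell_x g_act) _ _.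
  move=> i i_act; rewrite dotpZr e_dual // side_flip.
  by case: eqVneq => [->|_]; rewrite ?mulr0 ?mulr1 ?mulrNN ?side_sqr.
by rewrite dotpZr mulNr oppr_lt0.
Qed.

Hypothesis hgen : generic_intersections w h.

Lemma generic_solvable (A : {set 'I_n}) x : hyp_cap w h A x ->
  forall t : 'I_n -> R, exists u, forall i, i \in A -> dotp (w i) u = t i.
Proof.
move=> xA t; have [leAd [_ dim_le]] := hgen (ex_intro _ x xA).
pose M : 'M[R]_(d, #|A|) := \matrix_(j, l) w (enum_val l) 0 j.
pose f := linfun (@mulmxr R 1 d #|A| M).
have fE u l : f u 0 l = dotp (w (enum_val l)) u.
  by rewrite lfunE /= mxE; apply: eq_bigr => j _; rewrite mxE mulrC.
have ker_dim : (\dim (lker f) <= d - #|A|)%N.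
  rewrite -(size_tuple (vbasis (lker f))); apply: dim_le (basis_free (vbasisP _)) _.
  move=> v /vbasis_mem; rewrite memv_ker => /eqP fv0; exists (x + v), x.
  split; last by split; [exact: xA | rewrite addrC addKr].
  move=> i iA; have := fE v (enum_rank_in iA i).
  by rewrite fv0 mxE enum_rankK_in // dotpDr => <-; rewrite addr0 xA.
have img_full : limg f = fullv.
  apply/eqP; rewrite eqEdim subvf /=.
  have := limg_ker_dim f fullv; rewrite capfv !dimvf !dim_matrix !mul1r.
  (* [set] merges the convertible forms of [#|A|] into one atom for [lia]. *)
  set k := #|A| in leAd ker_dim *.
  by move: ker_dim; move: (\dim (lker f)) (\dim (limg f)) => a b; lia.
have /memv_imgP[u _ fu] : \row_l t (enum_val l) \in limg f by rewrite img_full memvf.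
exists u => i iA; have := fE u (enum_rank_in iA i).
by rewrite -fu mxE enum_rankK_in.
Qed.

Lemma hyp_cap_active x : hyp_cap w h (active x) x.
Proof. by move=> i; rewrite inE => /eqP. Qed.

Lemma flip_active_code sigma x g : cell sigma x -> g \in active x -> flip sigma g \in code w h.
Proof.
move=> cell_x g_act.
have [u u_side] := generic_solvable (@hyp_cap_active x) (side (flip sigma g)).
apply: (code_of_cell (u := u) (cell_flip cell_x g_act)) => i i_act.
by rewrite u_side // side_sqr ltr01.
Qed.

Lemma min_point_tangent sigma x u : min_point sigma x ->
  (forall i, i \in active x -> 0 <= side sigma i * dotp (w i) u) -> 0 <= dotp x u.
Proof.
move=> min_x u_in; rewrite leNgt; apply/negP => /(cell_descent min_x.1 u_in).
by rewrite (cell_sqnorm_min min_x) ltxx.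
Qed.

Lemma min_point_exposed sigma x v : min_point sigma x -> dotp x v < 0 ->
  exists g e, [/\ g \in active x, forall i, i \in active x -> dotp (w i) e = (i == g)%:R,
    side sigma g * dotp (w g) v < 0 & 0 < side sigma g * dotp x e].
Proof.
move=> min_x x_v.
have /choice[e e_dual] :
    forall g, exists e, forall i, i \in active x -> dotp (w i) e = (i == g)%:R.
  by move=> g; apply: generic_solvable (@hyp_cap_active x) _.
(* The remainder [v0] of [v] after subtracting its components along the dual
   basis is tangent to every active hyperplane, so minimality of [x] forces
   [dotp x v0 = 0] and [dotp x v] splits over the active hyperplanes. *)
pose v0 := v - \sum_(g in active x) dotp (w g) v *: e g.
have w_v0 i : i \in active x -> dotp (w i) v0 = 0.
  move=> i_act; rewrite dotpBr dotp_sumr (bigD1 i) //= dotpZr e_dual // eqxx mulr1.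
  rewrite big1 ?addr0 ?subrr // => g /andP[_ neq_gi].
  by rewrite dotpZr e_dual // eq_sym (negbTE neq_gi) mulr0.
have x_v0 : dotp x v0 = 0.
  apply/le_anti/andP; split; last first.
    by apply: (min_point_tangent min_x) => i /w_v0 ->; rewrite mulr0.
  rewrite -oppr_ge0 -dotpNr; apply: (min_point_tangent min_x) => i /w_v0.
  by rewrite dotpNr => ->; rewrite oppr0 mulr0.
have x_v_sum : dotp x v = \sum_(g in active x) dotp (w g) v * dotp x (e g).
  rewrite -{1}[v](subrK (\sum_(g in active x) dotp (w g) v *: e g)) -/v0 dotpDr x_v0 add0r.
  by rewrite dotp_sumr; apply: eq_bigr => g _; rewrite dotpZr.
have [g g_act neg_g] : exists2 g, g \in active x & dotp (w g) v * dotp x (e g) < 0.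
  apply/exists_inP; apply: contraLR x_v => /exists_inPn neg; rewrite -leNgt x_v_sum.
  by apply: sumr_ge0 => g /neg; rewrite -leNgt.
pose s := side sigma g.
have x_eg : 0 <= s * dotp x (e g).
  rewrite -dotpZr; apply: (min_point_tangent min_x) => i i_act; rewrite dotpZr e_dual //.
  by case: eqVneq => [->|_]; rewrite ?mulr1 ?side_sqr ?mulr0.
have : (s * dotp (w g) v) * (s * dotp x (e g)) < 0 by rewrite mulrACA side_sqr mul1r.
move: x_eg; set p := s * dotp (w g) v; set q := s * dotp x (e g) => q_ge0 pq_lt0.
have q_gt0 : 0 < q.
  by rewrite lt_def q_ge0 andbT; apply: contraTneq pq_lt0 => ->; rewrite mulr0 ltxx.
by exists g, (e g); split; [| exact: e_dual | rewrite -(pmulr_llt0 _ q_gt0) |].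
Qed.

Lemma flip_lowers_sqnorm sigma tau x y :
  min_point sigma x -> cell tau y -> dotp x (y - x) < 0 ->
  exists g, [/\ (g \in sigma) != (g \in tau), flip sigma g \in code w h &
    cell_sqnorm (flip sigma g) < cell_sqnorm sigma].
Proof.
move=> min_x cell_y x_v; have [g [e [g_act e_dual v_neg x_e]]] := min_point_exposed min_x x_v.
exists g; split; last 2 first.
- exact: flip_active_code min_x.1 g_act.
- by rewrite (cell_sqnorm_min min_x); apply: flip_descent min_x.1 g_act e_dual x_e.
apply/negP => /eqP same_side; have := cell_y g.
have -> : slack tau g y = slack sigma g (x + 1 *: (y - x)).
  by rewrite scale1r addrC subrK /slack /side same_side.
by rewrite slack_line active_slack // add0r mul1r leNgt v_neg.
Qed.

Lemma flip_lowers_card sigma tau x : min_point sigma x -> cell tau x -> tau != sigma ->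
  (#|tau| <= #|sigma|)%N ->
  exists g, [/\ (g \in sigma) != (g \in tau), flip sigma g \in code w h,
    cell_sqnorm (flip sigma g) <= cell_sqnorm sigma & (#|flip sigma g| < #|sigma|)%N].
Proof.
move=> min_x cell_tx neq_ts le_card.
have [g g_s g_t] : exists2 g, g \in sigma & g \notin tau.
  apply/subsetPn; apply: (contra _ neq_ts) => sub.
  by rewrite eq_sym eqEcard sub le_card.
have g_act : g \in active x.
  have := min_x.1 g; have := cell_tx g; rewrite /slack /side g_s (negbTE g_t) inE.
  by rewrite mul1r mulN1r oppr_ge0 subr_le0 subr_ge0 => ge le; rewrite eq_le ge le.
exists g; split; rewrite ?g_s ?g_t //.
- exact: flip_active_code min_x.1 g_act.
- by rewrite (cell_sqnorm_min min_x); apply: cell_sqnorm_le; apply: cell_flip min_x.1 g_act.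
- by rewrite flipD1 // (cardsD1 g sigma) g_s.
Qed.

Definition shell_key sigma : R *l nat := (cell_sqnorm sigma, #|sigma|).

Lemma flip_lowers_key sigma tau : sigma \in code w h -> tau \in code w h -> tau != sigma ->
  (shell_key tau <= shell_key sigma)%O ->
  exists g, [/\ (g \in sigma) != (g \in tau), flip sigma g \in code w h &
    (shell_key (flip sigma g) < shell_key sigma)%O].
Proof.
move=> /exists_min_point[x min_x] /exists_min_point[y min_y] neq_ts.
rewrite lexi_pair (cell_sqnorm_min min_x) (cell_sqnorm_min min_y) => /andP[le_yx le_card].
have [x_v | v_x] := ltP (dotp x (y - x)) 0.
  have [g [diff_g flip_code lt_flip]] := flip_lowers_sqnorm min_x min_y.1 x_v.
  by exists g; split; rewrite // ltxi_pair (ltW lt_flip) lt_geF.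
have y_x : y = x.
  apply/eqP; rewrite -subr_eq0 -dotp_eq0 eq_le dotp_ge0 andbT.
  have := dotp_line x (y - x) 1; rewrite scale1r addrC subrK; lra.
rewrite y_x lexx /= in le_card; rewrite y_x in min_y.
have [g [diff_g flip_code le_flip lt_card]] := flip_lowers_card min_x min_y.1 neq_ts le_card.
by exists g; split; rewrite // ltxi_pair le_flip; apply/implyP.
Qed.

End Hyperplanes.

Theorem lemma7p2 (R : realType) (d n : nat)
  (w : 'I_n -> 'rV[R]_d) (h : 'I_n -> R)
  (hw : forall i, w i != 0%R)
  (hgen : generic_intersections w h) :
  shellable (polar_complex (code w h)).
Proof.
pose le_key := [rel sigma tau | (shell_key w h sigma <= shell_key w h tau)%O].
have le_key_trans : transitive le_key by move=> ? ? ? /= ; apply: le_trans.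
have le_key_refl : reflexive le_key by move=> ? /=.
pose s := sort le_key (enum (code w h)).
have sorted_s : sorted le_key s by apply: sort_sorted => a b; apply: le_total.
have s_code : s =i code w h by move=> sigma; rewrite mem_sort mem_enum.
apply: (shellable_polar_complex (s := s)); first by rewrite sort_uniq enum_uniq.
  exact: s_code.
move=> i lt_i_s tau tau_s; set sigma := nth set0 s i.
have neq_ts : tau != sigma.
  by apply: contraTneq tau_s => ->; apply: nth_notin_take; rewrite ?sort_uniq ?enum_uniq.
have sigma_code : sigma \in code w h by rewrite -s_code mem_nth.
have tau_code : tau \in code w h by rewrite -s_code (mem_take tau_s).
have le_ts := sorted_take_le set0 le_key_trans le_key_refl sorted_s lt_i_s tau_s.
have [g [diff_g flip_code lt_flip]] := flip_lowers_key hgen sigma_code tau_code neq_ts le_ts.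
exists g => //; apply: (sorted_mem_take (x0 := set0) le_key_trans le_key_refl sorted_s).
  by rewrite s_code.
by rewrite /= -ltNge.
Qed.
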